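(* Let $M=D-A$ be an $n\times n$ SDDM matrix, where $D=\mathrm{diag}(d_1,\dots,d_n)$ is its diagonal, and let $\kappa=\max\{2,\kappa(D-A)\}$. Let $c=(1-1/\kappa)/\max_i d_i$. Then all eigenvalues of $c(D-A)$ lie in $[\frac{1}{2\kappa},2-\frac{1}{2\kappa}]$. Moreover, writing $c(D-A)=I-X$ with $X=I-c(D-A)$, all entries of $X$ are nonnegative and $\rho(X)\le 1-\frac{1}{2\kappa}$.
   Context: SDDM matrix: symmetric, positive definite, with nonpositive off-diagonal entries and $m_{ii}>\sum_{j\neq i}|m_{ij}|$ for all $i$. $\kappa(\cdot)$ is the condition number (ratio of largest to smallest singular value), and $\rho(\cdot)$ is the spectral radius. *)

From HB Require Import structures.
From mathcomp Require Import all_boot all_order all_algebra.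
From mathcomp Require Import complex.
Set Implicit Arguments. Unset Strict Implicit. Unset Printing Implicit Defensive.
Import Order.TTheory GRing.Theory Num.Theory.
Local Open Scope ring_scope.

Definition SDDM (R : realFieldType) (n : nat) (M : 'M[R]_n) : Prop :=
  [/\ M^T = M,
      (forall x : 'cV[R]_n, x != 0 -> 0 < (x^T *m M *m x) 0 0),
      (forall i j : 'I_n, i != j -> M i j <= 0) &
      (forall i : 'I_n, \sum_(j < n | j != i) `|M i j| < M i i)].

Definition singular_value (R : realFieldType) (n : nat) (A : 'M[R]_n) (s : R) : Prop :=
  0 <= s /\ eigenvalue (A^T *m A) (s ^+ 2).

Definition is_max_singular_value (R : realFieldType) (n : nat) (A : 'M[R]_n) (s : R) : Prop :=
  singular_value A s /\ forall t, singular_value A t -> t <= s.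

Definition is_min_singular_value (R : realFieldType) (n : nat) (A : 'M[R]_n) (s : R) : Prop :=
  singular_value A s /\ forall t, singular_value A t -> s <= t.

Definition cmx (R : rcfType) (n : nat) (A : 'M[R]_n) : 'M[R[i]]_n :=
  map_mx (fun x : R => (x%:C)%C) A.

Definition ceigenvalue (R : rcfType) (n : nat) (A : 'M[R]_n) (z : R[i]) : Prop :=
  eigenvalue (cmx A) z.

Definition spectral_radius_le (R : rcfType) (n : nat) (A : 'M[R]_n) (r : R) : Prop :=
  forall z : R[i], ceigenvalue A z -> `|z| <= (r%:C)%C.

(* Since M is symmetric positive definite, its singular values are its
   eigenvalues, all real and positive. Gershgorin's theorem puts every
   eigenvalue r below 2 max_i d_i, and the Rayleigh quotient at a coordinate
   vector puts max_i d_i below smax <= kappa smin <= kappa r. Hence c r lies in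
   [(1 - 1/kappa)/kappa, 2(1 - 1/kappa)], inside [1/(2 kappa), 2 - 1/(2 kappa)],
   and the eigenvalues 1 - c r of X have modulus at most 1 - 1/(2 kappa). The
   entries of X are nonnegative since off-diagonal entries of M are nonpositive
   and c d_i <= 1. *)

From HB Require Import structures.
From mathcomp Require Import all_boot all_order all_algebra.
From mathcomp Require Import complex.
From mathcomp Require Import lra.
Import Order.TTheory GRing.Theory Num.Theory.
Set Implicit Arguments. Unset Strict Implicit. Unset Printing Implicit Defensive.
Local Open Scope ring_scope.
Local Open Scope sesquilinear_scope.

Lemma hermsym_eigenvalue_real (C : numClosedFieldType) n (A : 'M[C]_n) z :
  A \is hermsymmx -> eigenvalue A z -> z \is Num.real.
Proof.
move=> /is_hermitianmxP; rewrite expr0 scale1r => hA /eigenvalueP [v vA vn0].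
have vv_gt0 : 0 < (v *m v ^t*) 0 0 by rewrite -dotmxE dotmx_is_dotmx.
have quad : (v *m A *m v ^t*) 0 0 = z * (v *m v ^t*) 0 0.
  by rewrite vA -scalemxAl mxE.
have quad_selfadj : (v *m A *m v ^t*) ^t* = v *m A *m v ^t*.
  by rewrite !trmx_mul !map_mxM trmxCK -hA mulmxA.
have : ((v *m A *m v ^t*) 0 0)^* = (v *m A *m v ^t*) 0 0.
  by rewrite -{2}quad_selfadj !mxE.
rewrite quad rmorphM /= (conj_Creal (gtr0_real vv_gt0)) => /(mulIf (lt0r_neq0 vv_gt0)).
by rewrite CrealE => ->.
Qed.

Lemma eigenvalue_dim_gt0 (F : fieldType) n (A : 'M[F]_n) a :
  eigenvalue A a -> (0 < n)%N.
Proof. by case: n A => // A /eigenvalueP [v _]; rewrite thinmx0 eqxx. Qed.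

Lemma eigenvalue_scalar_addZ (F : fieldType) n (A : 'M[F]_n) a b z :
  b != 0 -> eigenvalue (a%:M + b *: A) z -> eigenvalue A ((z - a) / b).
Proof.
move=> b_neq0 /eigenvalueP [v vA vn0]; apply/eigenvalueP; exists v => //.
apply: (scalerI b_neq0); rewrite scalerA mulrC divfK // scalerBl -vA.
by rewrite mulmxDr mul_mx_scalar -scalemxAr addrC addKr.
Qed.

Lemma normalmx_spectral_eigenvalue (C : numClosedFieldType) n (A : 'M[C]_n) k :
  A \is normalmx -> eigenvalue A (spectral_diag A 0 k).
Proof.
move=> /orthomx_spectralP A_spectral; set P := spectralmx A in A_spectral.
have P_unit : P \in unitmx by apply: spectral_unit.
have rowPV : row k P *m invmx P = row k 1%:M by rewrite -row_mul mulmxV.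
apply/eigenvalueP; exists (row k P).
  rewrite {1}A_spectral !mulmxA rowPV.
  have -> : row k P = row k 1%:M *m P by rewrite -row_mul mul1mx.
  rewrite scalemxAl; congr (_ *m _); rewrite mul_mx_diag; apply/rowP => j; rewrite !mxE.
  by case: eqVneq => [->|]; rewrite ?mulr1 ?mulr0 ?mul1r ?mul0r.
apply: contraTneq isT => rowP0; move: rowPV; rewrite rowP0 mul0mx.
by move=> /rowP /(_ k); rewrite !mxE eqxx => /eqP; rewrite eq_sym oner_eq0.
Qed.

Section RealSymmetricSpectrum.
Variables (R : rcfType) (n : nat).
Implicit Types (M : 'M[R]_n) (r : R) (z : R[i]).
Local Open Scope complex_scope.

Lemma eigenvalue_cmx M r : eigenvalue (cmx M) r%:C = eigenvalue M r.
Proof. by rewrite !eigenvalue_root_char -map_char_poly fmorph_root. Qed.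

Lemma cmx_realmx M : cmx M \is a realmx.
Proof. by apply/mxOverP => i j; rewrite mxE; apply/complex_realP; exists (M i j). Qed.

Lemma cmx_hermsym M : M^T = M -> cmx M \is hermsymmx.
Proof.
move=> Msym; apply: realsym_hermsym (cmx_realmx M).
by apply/is_hermitianmxP; rewrite expr0 scale1r map_mx_id // /cmx map_trmx Msym.
Qed.

Lemma sym_ceigenvalueP M z : M^T = M -> eigenvalue (cmx M) z ->
  exists2 r, z = r%:C & eigenvalue M r.
Proof.
move=> Msym Mz; have /complex_realP [r zr] := hermsym_eigenvalue_real (cmx_hermsym Msym) Mz.
by exists r => //; rewrite -eigenvalue_cmx -zr.
Qed.

Lemma sym_ceigenvalue_scalar_addZ M a b z : M^T = M -> b != 0 ->
  ceigenvalue (a%:M + b *: M) z -> exists2 r, z = (a + b * r)%:C & eigenvalue M r.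
Proof.
move=> Msym b_neq0; rewrite /ceigenvalue /cmx map_mxD map_scalar_mx map_mxZ /=.
have bC_neq0 : b%:C != 0 by rewrite (inj_eq (@complexI R)).
move=> /(eigenvalue_scalar_addZ bC_neq0) /(sym_ceigenvalueP Msym) [r zr Mr].
exists r => //; rewrite rmorphD rmorphM /= -zr mulrC divfK //.
by rewrite addrC subrK.
Qed.

(* [M i i] is a convex combination of the eigenvalues, with weights [|P k i|^2]
   taken from the unitary diagonalizing matrix [P]. *)
Lemma sym_diag_le_eigenvalue M i : M^T = M -> exists2 r, eigenvalue M r & M i i <= r.
Proof.
move=> Msym; have M_normal := hermitian_normalmx (cmx_hermsym Msym).
have eig k := sym_ceigenvalueP Msym (normalmx_spectral_eigenvalue k M_normal).
move: (M_normal) => /orthomx_spectralP M_spectral.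
set P := spectralmx (cmx M) in M_spectral; set d := spectral_diag (cmx M) in M_spectral eig.
have P_unit : P \in unitmx by apply: spectral_unit.
have PV : invmx P = P ^t* by apply/invmx_unitary/spectral_unitarymx.
pose re k := complex.Re (d 0 k).
have d_re k : d 0 k = (re k)%:C by rewrite /re; case: (eig k) => r ->.
have [kmax _ kmax_max] := @arg_maxP _ _ _ i xpredT re isT.
exists (re kmax); first by rewrite /re; case: (eig kmax) => r ->.
have col_norm1 : \sum_k invmx P i k * P k i = 1.
  by have := congr1 (fun B : 'M_n => B i i) (mulVmx P_unit); rewrite !mxE eqxx.
rewrite -lecR (_ : (M i i)%:C = cmx M i i); last by rewrite mxE.
rewrite M_spectral mxE -[X in _ <= X]mulr1 -col_norm1 mulr_sumr; apply: ler_sum => k _.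
rewrite mul_mx_diag mxE mulrAC [X in _ <= X]mulrC ler_wpM2l //.
  by rewrite PV !mxE mulrC mul_conjC_ge0.
by rewrite d_re lecR; apply: kmax_max.
Qed.

End RealSymmetricSpectrum.

(* Column sums, because eigenvectors are row vectors: [v *m A = r *: v]. *)
Lemma eigenvalue_gershgorin_col (R : realFieldType) n (A : 'M[R]_n) r :
  eigenvalue A r -> exists i, `|r - A i i| <= \sum_(j < n | j != i) `|A j i|.
Proof.
case/eigenvalueP => v vA vn0.
have [i0 vi0_neq0] : exists i, v 0 i != 0.
  apply/existsP; apply: contraNT vn0; rewrite negb_exists => /forallP v0.
  by apply/eqP/rowP => j; rewrite mxE; apply/eqP/negbNE/v0.
have [i _ i_max] := @arg_maxP _ _ _ i0 xpredT (fun k => `|v 0 k|) isT.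
have vi_gt0 : 0 < `|v 0 i| by apply: lt_le_trans (i_max i0 isT); rewrite normr_gt0.
exists i; rewrite -(ler_pM2l vi_gt0) mulr_sumr mulrC -normrM.
have : \sum_j v 0 j * A j i = r * v 0 i.
  by have := congr1 (fun u : 'rV_n => u 0 i) vA; rewrite !mxE.
rewrite (bigD1 i) //= => vAi; rewrite mulrBl -vAi mulrC addrC addrK.
apply: le_trans (ler_norm_sum _ _ _) _; apply: ler_sum => j _.
by rewrite normrM ler_wpM2r //; apply: i_max.
Qed.

Definition posdefmx (R : realFieldType) n (M : 'M[R]_n) :=
  forall x : 'cV[R]_n, x != 0 -> 0 < (x^T *m M *m x) 0 0.

Section SymmetricPositiveDefinite.
Variables (R : rcfType) (n : nat) (M : 'M[R]_n).
Hypotheses (Msym : M^T = M) (Mpd : posdefmx M).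

Lemma posdefmx_mul_neq0 (u : 'rV[R]_n) : u != 0 -> u *m M != 0.
Proof.
move=> u_neq0; have := @Mpd (u^T); rewrite trmx_eq0 u_neq0 trmxK => /(_ isT).
by apply: contraTneq => ->; rewrite mul0mx mxE ltxx.
Qed.

Lemma posdefmx_eigenvalue_gt0 r : eigenvalue M r -> 0 < r.
Proof.
case/eigenvalueP => v vA vn0; have := @Mpd (v^T).
rewrite trmx_eq0 vn0 trmxK vA -scalemxAl mxE => /(_ isT) rvv_gt0.
have vv_ge0 : 0 <= (v *m v^T) 0 0.
  by rewrite mxE; apply: sumr_ge0 => j _; rewrite mxE -expr2 sqr_ge0.
by rewrite ltNge; apply: contraTN rvv_gt0 => r_le0; rewrite -leNgt mulr_le0_ge0.
Qed.

Lemma eigenvalue_singular_value r : eigenvalue M r -> singular_value M r.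
Proof.
move=> Mr; split; first exact/ltW/posdefmx_eigenvalue_gt0.
case/eigenvalueP: Mr => v vA vn0; apply/eigenvalueP; exists v => //.
by rewrite Msym mulmxA vA -scalemxAl vA scalerA expr2.
Qed.

Lemma singular_value_gt0 s : singular_value M s -> 0 < s.
Proof.
case=> s_ge0 /eigenvalueP [v vA vn0]; rewrite lt0r s_ge0 andbT.
apply: contra_eqN vA => /eqP ->; rewrite expr2 mulr0 scale0r Msym mulmxA.
exact: posdefmx_mul_neq0 (posdefmx_mul_neq0 vn0).
Qed.

Lemma diag_le_max_singular_value smax i :
  is_max_singular_value M smax -> M i i <= smax.
Proof.
case=> _ smax_max; have [r Mr Mii_le] := sym_diag_le_eigenvalue i Msym.
exact: le_trans Mii_le (smax_max _ (eigenvalue_singular_value Mr)).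
Qed.

End SymmetricPositiveDefinite.

Lemma Zmatrix_one_subZ_ge0 (R : numDomainType) n (M : 'M[R]_n) c :
  (forall i j, i != j -> M i j <= 0) -> 0 <= c -> (forall i, c * M i i <= 1) ->
  forall i j, 0 <= (1%:M - c *: M) i j.
Proof.
move=> M_offdiag c_ge0 cMii_le1 i j; rewrite !mxE.
case: eqVneq => [<-|ij]; first by rewrite subr_ge0.
by rewrite sub0r oppr_ge0 mulr_ge0_le0 ?M_offdiag.
Qed.

Lemma scaled_spectrum_bounds (R : realFieldType) (k d s S r : R) :
  2 <= k -> 0 < s -> S / s <= k -> 0 < d <= S -> s <= r -> r < 2 * d ->
  1 / (2 * k) <= (1 - 1 / k) / d * r <= 2 - 1 / (2 * k).
Proof.
move=> k_ge2 s_gt0 S_le /andP [d_gt0 d_le] s_le r_lt.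
have k_gt0 : 0 < k by apply: lt_le_trans k_ge2.
have d_le_kr : d <= k * r.
  apply: le_trans d_le (le_trans _ (ler_wpM2l (ltW k_gt0) s_le)).
  by rewrite -ler_pdivrMr.
have -> : (1 - 1 / k) / d * r = (1 - k^-1) * (r / d) by rewrite mulrAC mulrA div1r.
have -> : 1 / (2 * k) = k^-1 / 2 by rewrite div1r invfM mulrC.
have kV : k^-1 * k = 1 by rewrite mulVf // lt0r_neq0.
have dV : r / d * d = r by rewrite divfK // lt0r_neq0.
have kV_gt0 : 0 < k^-1 by rewrite invr_gt0.
move: kV dV kV_gt0; set a := k^-1; set b := r / d => kV dV a_gt0.
have a_le_half : a <= 1 / 2 by nra.
have a_le_b : a <= b by nra.
have b_lt2 : b < 2 by nra.
by apply/andP; split; nra.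
Qed.

Section SDDM.
Variables (R : rcfType) (n : nat) (M : 'M[R]_n).
Hypothesis M_SDDM : SDDM M.

Lemma SDDM_posdefmx : posdefmx M.
Proof. by case: M_SDDM. Qed.

Lemma SDDM_diag_gt0 i : 0 < M i i.
Proof.
have [_ _ _ M_dom] := M_SDDM; apply: le_lt_trans (M_dom i).
by apply: sumr_ge0 => j _; apply: normr_ge0.
Qed.

Lemma SDDM_eigenvalue_lt_2diag r : eigenvalue M r -> exists i, r < 2 * M i i.
Proof.
have [Msym _ _ M_dom] := M_SDDM.
move=> /eigenvalue_gershgorin_col [i col_bound]; exists i.
have row_col : \sum_(j < n | j != i) `|M j i| = \sum_(j < n | j != i) `|M i j|.
  by apply: eq_bigr => j _; rewrite -{1}Msym mxE.
rewrite mulr2n mulrDl mul1r -ltrBlDr.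
by apply: le_lt_trans (ler_norm _) (le_lt_trans col_bound _); rewrite row_col.
Qed.

Lemma SDDM_max_diag_bounds smax (i : 'I_n) : is_max_singular_value M smax ->
  0 < \big[Num.max/0]_(i < n) M i i <= smax.
Proof.
have [Msym _ _ _] := M_SDDM; move=> Msmax.
have [im _ ->] := @eq_bigmax _ _ _ 0 i xpredT (fun i => M i i) isT
  (fun i _ => ltW (SDDM_diag_gt0 i)).
by rewrite SDDM_diag_gt0 (diag_le_max_singular_value Msym SDDM_posdefmx).
Qed.

Lemma SDDM_scaled_eigenvalue_bounds smax smin r :
  let kappa := Num.max 2 (smax / smin) in
  is_max_singular_value M smax -> is_min_singular_value M smin -> eigenvalue M r ->
  1 / (2 * kappa) <= (1 - 1 / kappa) / \big[Num.max/0]_(i < n) M i i * r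
                  <= 2 - 1 / (2 * kappa).
Proof.
have [Msym _ _ _] := M_SDDM; have Mpd := SDDM_posdefmx.
move=> kappa Msmax [smin_sv smin_min] Mr; have [i r_lt] := SDDM_eigenvalue_lt_2diag Mr.
apply: (scaled_spectrum_bounds _ _ _ (SDDM_max_diag_bounds i Msmax)).
- by rewrite le_max lexx.
- exact: (singular_value_gt0 Msym Mpd smin_sv).
- by rewrite le_max lexx orbT.
- exact/smin_min/(eigenvalue_singular_value Msym Mpd).
by apply: lt_le_trans r_lt _; rewrite ler_pM2l //; apply: (le_bigmax _ (fun i => M i i)).
Qed.

End SDDM.

Lemma normr_real_complex (R : rcfType) (x : R) : `|(x%:C)%C| = (`|x|%:C)%C.
Proof. by rewrite normc_def /= expr0n addr0 sqrtr_sqr. Qed.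

Lemma norm_one_sub_le (R : realDomainType) (x e : R) :
  e <= x <= 2 - e -> `|1 - x| <= 1 - e.
Proof. by case/andP => lo hi; rewrite ler_norml; apply/andP; split; lra. Qed.

Theorem mainTheorem3 (R : rcfType) (n : nat) (M : 'M[R]_n) (smax smin : R) :
  SDDM M ->
  is_max_singular_value M smax ->
  is_min_singular_value M smin ->
  let kappa := Num.max 2 (smax / smin) in
  let c := (1 - 1 / kappa) / \big[Num.max/0]_(i < n) M i i in
  let X := 1%:M - c *: M in
  (forall z : R[i], ceigenvalue (c *: M) z ->
      ((1 / (2 * kappa))%:C)%C <= z <= ((2 - 1 / (2 * kappa))%:C)%C) /\
  (forall i j : 'I_n, 0 <= X i j) /\
  spectral_radius_le X (1 - 1 / (2 * kappa)).
Proof.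
move=> M_SDDM Msmax Msmin kappa c X; have [Msym _ M_offdiag _] := M_SDDM.
have cr_bounds r : eigenvalue M r -> 1 / (2 * kappa) <= c * r <= 2 - 1 / (2 * kappa).
  exact: SDDM_scaled_eigenvalue_bounds.
have kappa_gt1 : 1 < kappa by rewrite lt_max ltr1n.
have kappaV_lt1 : 1 / kappa < 1.
  by rewrite ltr_pdivrMr ?mul1r // (lt_trans ltr01).
have cMii_le (i : 'I_n) : c * M i i <= 1 - 1 / kappa.
  have /andP [dmax_gt0 _] := SDDM_max_diag_bounds M_SDDM i Msmax.
  rewrite mulrAC ler_pdivrMr // ler_pM2l ?subr_gt0 //.
  exact: (le_bigmax _ (fun i => M i i)).
have c_gt0 (i : 'I_n) : 0 < c.
  have /andP [dmax_gt0 _] := SDDM_max_diag_bounds M_SDDM i Msmax.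
  by rewrite divr_gt0 ?subr_gt0.
split; [|split].
- move=> z Mz; have c_neq0 := lt0r_neq0 (c_gt0 (Ordinal (eigenvalue_dim_gt0 Mz))).
  rewrite -[c *: M]add0r -(scale0r (1%:M : 'M[R]_n)) scalemx1 in Mz.
  have [r -> Mr] := sym_ceigenvalue_scalar_addZ Msym c_neq0 Mz.
  by rewrite add0r !lecR cr_bounds.
- move=> i; apply: Zmatrix_one_subZ_ge0 => // [|k]; first exact/ltW/(c_gt0 i).
  by apply: le_trans (cMii_le k) _; rewrite gerBl divr_ge0 // ltW // (lt_trans ltr01).
- move=> z Xz; have c_gt0z := c_gt0 (Ordinal (eigenvalue_dim_gt0 Xz)).
  have Nc_neq0 : - c != 0 by rewrite oppr_eq0 lt0r_neq0.
  rewrite /X -scaleNr in Xz.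
  have [r -> Mr] := sym_ceigenvalue_scalar_addZ Msym Nc_neq0 Xz.
  by rewrite normr_real_complex lecR mulNr norm_one_sub_le ?cr_bounds.
Qed.
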